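(* Let $V$ be a finite vertex set with $|V| = n$ and let $\{k_u\}_{u\in V}$ be a degree sequence with $k_u \ge 1$ for all $u$. Then the graph of loopy-multigraphs $\mathcal{G}_{lm}(\{k_u\})$ is connected: for any two loopy-multigraphs $G, G'$ on $V$ with degree sequence $\{k_u\}$, there is a finite sequence of double edge swaps transforming $G$ into $G'$ such that every intermediate graph is also a loopy-multigraph on $V$ with degree sequence $\{k_u\}$.
   Context: All graphs are on a fixed labeled vertex set $V$; a graph is a multiset $E$ of unordered pairs $(u,v)$ with $u,v\in V$, where a pair $(u,u)$ is a self-loop and an edge occurring more than once is a multiedge (or multiple self-loop, if it is a loop). The degree $k_u$ of $u$ is the number of edge-endpoints at $u$, so each self-loop at $u$ contributes $2$ to $k_u$. A loopy-multigraph is such a graph in which each self-loop occurs at most once (no multiple self-loops) but non-loop edges may have any multiplicity. A double edge swap $(u,v),(x,y)\leadsto(u,x),(v,y)$ on a graph removes one copy of each of two edge occurrences $(u,v)$ and $(x,y)$ (loops allowed, i.e. possibly $u=v$ or $x=y$) and adds the edges $(u,x)$ and $(v,y)$; since edges are unordered, either pairing of endpoints may be used. It preserves the degree sequence. The graph of loopy-multigraphs $\mathcal{G}_{lm}(\{k_u\})$ has as vertices all loopy-multigraphs on $V$ with degree sequence $\{k_u\}$, with two distinct such graphs adjacent if one is obtained from the other by a single double edge swap. *)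

From mathcomp Require Import all_boot.
From Stdlib Require Import Relation_Operators.
Set Implicit Arguments. Unset Strict Implicit. Unset Printing Implicit Defensive.

(* A graph on the finite vertex set V is a multiset of unordered pairs,
   encoded by its multiplicity function: G u v = number of occurrences of
   the unordered pair {u,v} (G u u = number of self-loops at u). *)
Definition graph (V : finType) := V -> V -> nat.

Definition symmetric_graph (V : finType) (G : graph V) : Prop :=
  forall u v, G u v = G v u.

(* degree: each self-loop contributes 2 *)
Definition degree (V : finType) (G : graph V) (u : V) : nat :=
  (\sum_(v : V) G u v) + G u u.

Definition loopy_multigraph (V : finType) (G : graph V) : Prop :=
  symmetric_graph G /\ forall u, G u u <= 1.

Definition edge1 (V : finType) (a b : V) : graph V :=
  fun i j => nat_of_bool (((i == a) && (j == b)) || ((i == b) && (j == a))).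

(* double edge swap (u,v),(x,y) ~> (u,x),(v,y): remove one copy of each of
   the two edge occurrences (u,v), (x,y) (which must be present, counted with
   multiplicity) and add (u,x),(v,y). *)
Definition double_edge_swap (V : finType) (G G' : graph V) : Prop :=
  exists u v x y : V,
    (forall i j, edge1 u v i j + edge1 x y i j <= G i j) /\
    (forall i j, G' i j = G i j - edge1 u v i j - edge1 x y i j
                          + edge1 u x i j + edge1 v y i j).

Definition in_Glm (V : finType) (k : V -> nat) (G : graph V) : Prop :=
  loopy_multigraph G /\ forall u, degree G u = k u.

Definition Glm_adj (V : finType) (k : V -> nat) (G G' : graph V) : Prop :=
  in_Glm k G /\ in_Glm k G' /\ G <> G' /\ double_edge_swap G G'.

From mathcomp Require Import all_boot zify.
From Stdlib Require Import Relation_Operators FunctionalExtensionality.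
Set Implicit Arguments. Unset Strict Implicit. Unset Printing Implicit Defensive.

(* Measure the distance between two graphs with the same degrees by
   [dist G G' = sum_(i,j) |G i j - G' i j|].  If [G <> G'], degree balance
   gives a pair {a,c} missing from G (a deficit) and pairs {a,b}, {c,d} in
   excess at its ends; the swap {a,b},{c,d} ~> {a,c},{b,d} repairs three
   pairs and damages at most one, so the distance drops.  The swap is only
   forbidden when b = d already carries a loop; then b has excess edges to
   both a and c, and one reroutes through a deficit pair at b instead. *)

Lemma edge1_le1 (V : finType) (a b i j : V) : edge1 a b i j <= 1.
Proof. by rewrite /edge1; case: (_ || _). Qed.

Lemma edge1C (V : finType) (a b i j : V) : edge1 a b i j = edge1 a b j i.
Proof. by rewrite /edge1; case: (i == a); case: (j == b); case: (i == b); case: (j == a). Qed.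

Lemma edge1_self (V : finType) (a b : V) : edge1 a b a b = 1.
Proof. by rewrite /edge1 !eqxx. Qed.

Lemma edge1P (V : finType) (a b i j : V) :
  edge1 a b i j = 0 \/
  edge1 a b i j = 1 /\ ((i = a /\ j = b) \/ (i = b /\ j = a)).
Proof.
rewrite /edge1; case: (eqVneq i a); case: (eqVneq j b);
  case: (eqVneq i b); case: (eqVneq j a) => /=; intuition.
Qed.

Lemma sum_eq1 (V : finType) (x : V) : \sum_(v : V) ((v == x) : nat) = 1.
Proof. by rewrite (bigD1 x) //= eqxx big1 // => v /negbTE ->. Qed.

Lemma leq_sum_split (V : finType) (f d g e : V -> nat) :
  (forall v, f v + d v <= g v + e v) ->
  \sum_v f v + \sum_v d v <= \sum_v g v + \sum_v e v.
Proof. by move=> H; rewrite -!big_split; apply: leq_sum. Qed.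

Lemma degreeD (V : finType) (G H : graph V) (u : V) :
  degree (fun i j => G i j + H i j) u = degree G u + degree H u.
Proof. by rewrite /degree big_split /=; lia. Qed.

Lemma degree_edge1 (V : finType) (a b u : V) :
  degree (edge1 a b) u = (u == a) + (u == b).
Proof.
rewrite /degree /edge1.
have [ua|ua] := eqVneq u a; have [ub|ub] := eqVneq u b; rewrite ?ua ?ub /=.
- by rewrite (eq_bigr (fun v => (v == b) : nat)) ?sum_eq1 // => v _; rewrite -ua ub orbb.
- by rewrite (eq_bigr (fun v => (v == b) : nat)) ?sum_eq1 // => v _; rewrite orbF.
- by rewrite sum_eq1.
- by rewrite big1.
Qed.

Lemma sum_edge1_gt0 (V : finType) (a b : V) : 0 < \sum_i \sum_j edge1 a b i j.
Proof. by rewrite (bigD1 a) //= (bigD1 b) //= edge1_self. Qed.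

Lemma sum_edge1_le2 (V : finType) (a b : V) : \sum_i \sum_j edge1 a b i j <= 2.
Proof.
rewrite -[2]/(1 + 1) -{1}(sum_eq1 a) -(sum_eq1 b) -big_split /=.
by apply: leq_sum => i _; rewrite -degree_edge1 /degree leq_addr.
Qed.

Lemma exists_excess (V : finType) (H1 H2 : graph V)
    (hdeg : forall u, degree H1 u = degree H2 u) (a c : V) :
  H1 a c < H2 a c -> exists b, H2 a b < H1 a b.
Proof.
move=> hac; case: (pickP (fun b => H2 a b < H1 a b)) => [b hb|hn]; first by exists b.
have : \sum_v H1 a v + \sum_v ((v == c) : nat) <= \sum_v H2 a v + \sum_(v : V) 0.
  apply: leq_sum_split => v; have := hn v => /= /negbT; rewrite -leqNgt.
  by case: (eqVneq v c) => [->|] /=; lia.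
rewrite sum_eq1 big1_eq; have := hn a; have := hdeg a; rewrite /degree /=; lia.
Qed.

(* A missing loop counts twice in the degree, so it forces two excess
   edge occurrences at its vertex. *)
Lemma loop_deficit_two_excess (V : finType) (G G' : graph V)
    (hdeg : forall u, degree G u = degree G' u) (hl' : forall u, G' u u <= 1)
    (p : V) :
  G p p < G' p p ->
  exists b d, [/\ G' p b < G p b, G' p d < G p d & b <> d \/ G' p b + 2 <= G p b].
Proof.
move=> hpp; have [b hb] := exists_excess hdeg hpp.
case: (pickP (fun d => (d != b) && (G' p d < G p d))) => [d /andP[/eqP db hd]|hn].
  by exists b, d; split => //; left => /esym.
case: (leqP (G' p b + 2) (G p b)) => hb2; first by exists b, b; split => //; right.
have hpb : p != b by apply: contraTneq hb => <-; rewrite -leqNgt ltnW.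
have le_row : \sum_v G p v + 1 <= \sum_v G' p v + 1.
  rewrite -{1}(sum_eq1 p) -(sum_eq1 b); apply: leq_sum_split => v.
  have := hn v => /= /negbT; rewrite negb_and negbK -leqNgt.
  case: (eqVneq v p) => [->|vp]; first by rewrite (negbTE hpb); lia.
  by case: (eqVneq v b) => [->|vb] /=; lia.
have := hdeg p; have := hl' p; rewrite /degree; lia.
Qed.

(* [improving_swap G G' a b c d]: removing {a,b}, {c,d} and adding {a,c},
   {b,d} moves G towards G'.  The fourth condition makes the two removed
   occurrences available in G; the last one prevents a second loop at b. *)
Definition improving_swap (V : finType) (G G' : graph V) (a b c d : V) : Prop :=
  [/\ G a c < G' a c, G' a b < G a b, G' c d < G c d,
      ~ ((a = c /\ b = d) \/ (a = d /\ b = c)) \/ G' a b + 2 <= G a b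
    & b <> d \/ G b b = 0].

Section ExistsImprovingSwap.

Variables (V : finType) (G G' : graph V).
Hypotheses (hs : symmetric_graph G) (hs' : symmetric_graph G').
Hypothesis hl' : forall u, G' u u <= 1.
Hypothesis hdeg : forall u, degree G u = degree G' u.

Lemma improving_swap_through (x b1 b2 : V) :
  G' x x <= G x x -> G' x b1 < G x b1 -> G' x b2 < G x b2 ->
  b1 <> b2 \/ G b1 b1 = 0 -> exists a b c d, improving_swap G G' a b c d.
Proof.
move=> hxx hb1 hb2 hb12.
have [y hy] := exists_excess (fun u => esym (hdeg u)) hb1.
have hyx : G y x < G' y x by rewrite hs hs'.
have [d hd] := exists_excess hdeg hyx.
have hxy : x <> y by move=> exy; move: hy; rewrite -exy; lia.
have [b [hb hbd]] : exists b, G' x b < G x b /\ (b <> d \/ G b b = 0).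
  case: (eqVneq d b1) => [db1|db1]; last by exists b1; split=> //; left; apply/eqP; rewrite eq_sym.
  case: hb12 => [b12|]; last by exists b1; split=> //; right.
  by exists b2; split=> //; left; rewrite db1 => /esym.
exists x, b, y, d; split => //.
left => -[[exy _]|[_ eby]]; first exact: hxy.
by rewrite eby in hb; lia.
Qed.

Lemma exists_improving_swap (a c : V) :
  G a c < G' a c -> exists a b c d, improving_swap G G' a b c d.
Proof.
move=> hac; have [eac|ac] := eqVneq a c.
  rewrite -eac in hac *.
  have [b [d [hb hd hbd]]] := loop_deficit_two_excess hdeg hl' hac.
  have [hbb|hbb] := eqVneq (G b b) 0.
    exists a, b, a, d; split => //; last by right.
    case: hbd => [bd|]; last by right.
    left => -[[_ ebd]|[_ eba]]; first exact: bd.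
    by rewrite eba in hb; lia.
  apply: (@improving_swap_through b a a); rewrite ?(hs b a) ?(hs' b a) //.
  - by have := hl' b; lia.
  - by right; have := hl' a; lia.
have [b hb] := exists_excess hdeg hac.
have hca : G c a < G' c a by rewrite hs hs'.
have [d hd] := exists_excess hdeg hca.
have hgood : b <> d \/ G b b = 0 -> exists a b c d, improving_swap G G' a b c d.
  move=> hbd; exists a, b, c, d; split => //.
  left => -[[eac _]|[_ ebc]]; first by rewrite eac eqxx in ac.
  by rewrite ebc in hb; lia.
have [edb|bd] := eqVneq d b; last by apply: hgood; left; apply/eqP; rewrite eq_sym.
have [hbb|hbb] := eqVneq (G b b) 0; first by apply: hgood; right.
rewrite edb in hd.
apply: (@improving_swap_through b a c); rewrite ?(hs b a) ?(hs' b a) ?(hs b c) ?(hs' b c) //.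
- by have := hl' b; lia.
- by left; apply/eqP.
Qed.

End ExistsImprovingSwap.

Lemma eq_graph_no_deficit (V : finType) (G G' : graph V)
    (hdeg : forall u, degree G u = degree G' u) :
  (forall i j, G' i j <= G i j) -> G = G'.
Proof.
move=> hge; apply: functional_extensionality => i.
apply: functional_extensionality => j; apply/anti_leq; rewrite hge andbT.
rewrite leqNgt; apply/negP => hlt.
have [b hb] := exists_excess (fun u => esym (hdeg u)) hlt.
by move: (hge i b); rewrite leqNgt hb.
Qed.

Definition swap_graph (V : finType) (G : graph V) (a b c d : V) : graph V :=
  fun i j => G i j - edge1 a b i j - edge1 c d i j + edge1 a c i j + edge1 b d i j.

Definition dist (V : finType) (G H : graph V) : nat :=
  \sum_i \sum_j ((G i j - H i j) + (H i j - G i j)).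

Lemma degree_swap_graph (V : finType) (G : graph V) (a b c d u : V) :
  (forall i j, edge1 a b i j + edge1 c d i j <= G i j) ->
  degree (swap_graph G a b c d) u = degree G u.
Proof.
move=> hfeas.
have E : (fun i j => swap_graph G a b c d i j + edge1 a b i j + edge1 c d i j)
       = (fun i j => G i j + edge1 a c i j + edge1 b d i j).
  apply: functional_extensionality => i; apply: functional_extensionality => j.
  by have := hfeas i j; rewrite /swap_graph; lia.
have := congr1 (fun H => degree H u) E; rewrite !degreeD !degree_edge1; lia.
Qed.

Lemma leq_sum2_split (V : finType) (f d g e : V -> V -> nat) :
  (forall i j, f i j + d i j <= g i j + e i j) ->
  \sum_i \sum_j f i j + \sum_i \sum_j d i j <= \sum_i \sum_j g i j + \sum_i \sum_j e i j.
Proof. by move=> H; apply: leq_sum_split => i; apply: leq_sum_split. Qed.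

Lemma sum2_split (V : finType) (f g : V -> V -> nat) :
  \sum_i \sum_j (f i j + g i j) = \sum_i \sum_j f i j + \sum_i \sum_j g i j.
Proof. by rewrite -big_split; apply: eq_bigr => i _; apply: big_split. Qed.

Lemma sym_graph_eq (V : finType) (H : graph V) (i j x y : V) : symmetric_graph H ->
  (i = x /\ j = y) \/ (i = y /\ j = x) -> H i j = H x y.
Proof. by move=> hH [] [-> ->] //; rewrite hH. Qed.

Section ImprovingSwapStep.

Variables (V : finType) (k : V -> nat) (G G' : graph V) (a b c d : V).
Hypotheses (hG : in_Glm k G) (hG' : in_Glm k G').
Hypothesis hsw : improving_swap G G' a b c d.

Let hs : symmetric_graph G := hG.1.1.
Let hs' : symmetric_graph G' := hG'.1.1.

Lemma swap_removed_excess (i j : V) : 0 < edge1 a b i j + edge1 c d i j ->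
  G' i j + edge1 a b i j + edge1 c d i j <= G i j.
Proof.
case: hsw => _ hab hcd hdistinct _.
case: (edge1P a b i j) => [->|[-> h1]]; case: (edge1P c d i j) => [->|[-> h2]] //.
- by rewrite (sym_graph_eq hs h2) (sym_graph_eq hs' h2); lia.
- by rewrite (sym_graph_eq hs h1) (sym_graph_eq hs' h1); lia.
rewrite (sym_graph_eq hs h1) (sym_graph_eq hs' h1).
case: hdistinct => [hdistinct|]; last by lia.
by exfalso; apply: hdistinct; case: h1 => -[? ?]; case: h2 => -[? ?]; subst; tauto.
Qed.

Lemma swap_feasible (i j : V) : edge1 a b i j + edge1 c d i j <= G i j.
Proof.
case: (posnP (edge1 a b i j + edge1 c d i j)) => [->//|pos].
by have := swap_removed_excess pos; lia.
Qed.

Lemma swap_added_deficit (i j : V) : edge1 a c i j = 1 -> G i j < G' i j.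
Proof.
case: hsw => hac _ _ _ _; case: (edge1P a c i j) => [->//|[_ h] _].
by rewrite (sym_graph_eq hs h) (sym_graph_eq hs' h).
Qed.

Lemma swap_graph_loop_le1 (u : V) : swap_graph G a b c d u u <= 1.
Proof.
case: hsw => _ hab _ _ hloop; rewrite /swap_graph.
have := hG.1.2 u; have := hG'.1.2 u.
have := edge1_le1 a b u u; have := edge1_le1 c d u u.
case: (edge1P a c u u) => [->|[eac hac]]; case: (edge1P b d u u) => [->|[-> hbd]].
- by lia.
- have [eb ed] : b = u /\ d = u by case: hbd => -[-> ->].
  by rewrite eb ed in hloop *; case: hloop => [/(_ erefl) []|->]; lia.
- by rewrite eac; have := swap_added_deficit eac; lia.
- have := swap_added_deficit eac.
  by case: hac => -[? ?]; case: hbd => -[? ?]; subst; lia.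
Qed.

Lemma swap_graph_in_Glm : in_Glm k (swap_graph G a b c d).
Proof.
split; first split.
- move=> i j; rewrite /swap_graph hs.
  by rewrite (edge1C a b) (edge1C c d) (edge1C a c) (edge1C b d).
- exact: swap_graph_loop_le1.
- by move=> u; rewrite degree_swap_graph ?hG.2 //; apply: swap_feasible.
Qed.

(* Pointwise, the three pairs {a,b}, {c,d}, {a,c} each gain at least 1 and
   {b,d} loses at most 1; summed over ordered pairs the gains total >= 3 and
   the loss <= 2. *)
Lemma dist_swap_graph_lt : dist (swap_graph G a b c d) G' < dist G G'.
Proof.
have pointwise : forall i j,
  (swap_graph G a b c d i j - G' i j) + (G' i j - swap_graph G a b c d i j)
    + (edge1 a b i j + edge1 c d i j + edge1 a c i j)
  <= (G i j - G' i j) + (G' i j - G i j) + edge1 b d i j.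
  move=> i j; rewrite /swap_graph.
  have := swap_removed_excess (i := i) (j := j); have := @swap_added_deficit i j.
  have := edge1_le1 a b i j; have := edge1_le1 c d i j.
  have := edge1_le1 a c i j; have := edge1_le1 b d i j; lia.
have := leq_sum2_split pointwise.
rewrite -/(dist (swap_graph G a b c d) G') -/(dist G G') !sum2_split.
have := sum_edge1_gt0 a b; have := sum_edge1_gt0 c d; have := sum_edge1_gt0 a c.
have := sum_edge1_le2 b d; lia.
Qed.

Lemma Glm_adj_swap_graph : Glm_adj k G (swap_graph G a b c d).
Proof.
split; first exact: hG.
split; first exact: swap_graph_in_Glm.
split; last by exists a, b, c, d; split=> //; apply: swap_feasible.
by move=> E; have := dist_swap_graph_lt; rewrite -E ltnn.
Qed.

End ImprovingSwapStep.

Theorem theorem1 (V : finType) (n : nat) (k : V -> nat)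
  (hn : #|V| = n) (hk : forall u : V, 1 <= k u)
  (G G' : graph V) (hG : in_Glm k G) (hG' : in_Glm k G') :
  clos_refl_trans_1n (graph V) (Glm_adj k) G G'.
Proof.
have [m] := ubnP (dist G G'); elim: m G hG => // m IH G hG hm.
have hdeg : forall u, degree G u = degree G' u by move=> u; rewrite hG.2 hG'.2.
case: (pickP (fun p : V * V => G p.1 p.2 < G' p.1 p.2)) => [[i j] /= hij|hn'].
  have [a [b [c [d hsw]]]] :=
    exists_improving_swap hG.1.1 hG'.1.1 hG'.1.2 hdeg hij.
  apply: rt1n_trans (Glm_adj_swap_graph hG hG' hsw) (IH _ _ _).
  - exact: swap_graph_in_Glm hG hG' hsw.
  - exact: leq_trans (dist_swap_graph_lt hG hG' hsw) _.
have -> : G = G'.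
  by apply: eq_graph_no_deficit => // i j; have := hn' (i, j); rewrite /= ltnNge => /negbFE.
exact: rt1n_refl.
Qed.
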